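(* Fix an instance of the data in the context and a cycle basis of the network graph $(\mathcal B,\mathcal L)$. For each cycle $C$ of the basis, with buses labeled $1,\dots,n$ in cyclic order ($n=|C|$) and oriented edges $(1,2),\dots,(n-1,n),(n,1)$, impose: (i) if $n=3$: $s_{12}c_{33}+c_{23}s_{31}+s_{23}c_{31}=0$ and $c_{12}c_{33}-c_{23}c_{31}+s_{23}s_{31}=0$; (ii) if $n\ge4$: introduce auxiliary real variables $\tilde c_{1,i},\tilde s_{1,i}$ for $i=3,\dots,n-1$, set $\tilde c_{12}=c_{12}$, $\tilde s_{12}=s_{12}$, $\tilde c_{1n}=c_{1n}$, $\tilde s_{1n}=s_{1n}$, and impose for $i=2,\dots,n-1$: $\tilde s_{1,i}c_{i+1,i+1}+s_{i,i+1}\tilde c_{1,i+1}-\tilde s_{1,i+1}c_{i,i+1}=0$ and $\tilde c_{1,i}c_{i+1,i+1}-c_{i,i+1}\tilde c_{1,i+1}-\tilde s_{1,i+1}s_{i,i+1}=0$; for $i=2,\dots,n-1$: $\tilde c_{1,i}^2+\tilde s_{1,i}^2=c_{11}c_{ii}$; and $c_{ij}^2+s_{ij}^2=c_{ii}c_{jj}$ for every edge $(i,j)$ of $C$. Then: (a) (validity) for every feasible point $(p^g,q^g,c,s,\theta)$ of the OPF formulation in the context, there exist values of the auxiliary variables such that all the constraints (i)–(ii) hold for every cycle of the basis; and (b) every $(p^g,q^g,c,s)$ satisfying (ALT), the coupling equalities $c_{ij}^2+s_{ij}^2=c_{ii}c_{jj}$ for all lines, and constraints (i)–(ii) (for some values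 of the auxiliary variables) satisfies, for each cycle $C$ in the basis, $\sum_{(i,j)\in C}\operatorname{atan2}(s_{ij},c_{ij})=2\pi k$ for some integer $k$ (sum over the oriented edges of $C$).
   Context: Data: finite bus set $\mathcal B$, line set $\mathcal L$ (unordered pairs of distinct buses; variables $c_{ij},s_{ij}$ for both orientations of each line), $\delta(i)$ the neighbors of $i$, generator set $\mathcal G\subseteq\mathcal B$, reals $G_{ij},B_{ij}$ (lines), $G_{ii},B_{ii}$ (buses), demands $p_i^d,q_i^d$, voltage bounds $0<\underline V_i\le\overline V_i$, generator bounds $p_i^{\min}\le p_i^{\max}$, $q_i^{\min}\le q_i^{\max}$ ($i\in\mathcal G$). Variables $p_i^g,q_i^g$ for $i\in\mathcal G$, with $p_i^g=q_i^g=0$ for $i\notin\mathcal G$. (ALT): $p_i^g-p_i^d=G_{ii}c_{ii}+\sum_{j\in\delta(i)}(G_{ij}c_{ij}-B_{ij}s_{ij})$, $q_i^g-q_i^d=-B_{ii}c_{ii}+\sum_{j\in\delta(i)}(-B_{ij}c_{ij}-G_{ij}s_{ij})$, $\underline V_i^2\le c_{ii}\le\overline V_i^2$ ($i\in\mathcal B$); $c_{ij}=c_{ji}$, $s_{ij}=-s_{ji}$ (lines); $p_i^{\min}\le p_i^g\le p_i^{\max}$, $q_i^{\min}\le q_i^g\le q_i^{\max}$ ($i\in\mathcal G$). OPF formulation: variables $(p^g,q^g,c,s,\theta)$ with $\theta\in\mathbb R^{\mathcal B}$ satisfying (ALT), $c_{ij}^2+s_{ij}^2=c_{ii}c_{jj}$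 and $\theta_j-\theta_i=\operatorname{atan2}(s_{ij},c_{ij})$ for every line $(i,j)$ (one fixed orientation per line suffices by symmetry). Here $\operatorname{atan2}(y,x)\in(-\pi,\pi]$ is the angle of the point $(x,y)\neq(0,0)$. A cycle basis is a basis of the cycle space of the graph consisting of cycles. *)

From HB Require Import structures.
From mathcomp Require Import all_boot all_order all_algebra.
From mathcomp Require Import all_classical all_reals all_analysis.
Set Implicit Arguments. Unset Strict Implicit. Unset Printing Implicit Defensive.
Import Order.TTheory GRing.Theory Num.Theory.
Local Open Scope ring_scope.

(* atan2 y x : the angle in (-pi, pi] of the point (x, y) <> (0, 0).
   (Value 0 at the origin is an arbitrary convention; never used there.) *)
Definition atan2 {R : realType} (y x : R) : R :=
  if 0 < x then atan (y / x)
  else if x < 0 then (if 0 <= y then atan (y / x) + pi else atan (y / x) - pi)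
  else if 0 < y then pi / 2
  else if y < 0 then - (pi / 2)
  else 0.

Section Graph.
Variable T : finType.

Definition is_cycle (adj : rel T) (p : seq T) : bool :=
  [&& uniq p, (3 <= size p)%N & cycle adj p].

Definition cycle_edges (p : seq T) : {set T * T} :=
  [set e | ((e.1 \in p) && (next p e.1 == e.2)) || ((e.2 \in p) && (next p e.2 == e.1))].

(* elements of the cycle space (over GF(2)): edge subsets (symmetric sets of
   ordered pairs of adjacent buses) in which every bus has even degree *)
Definition even_edge_set (adj : rel T) (E : {set T * T}) : Prop :=
  (forall e, e \in E -> adj e.1 e.2) /\
  (forall e, e \in E -> (e.2, e.1) \in E) /\
  (forall v : T, ~~ odd #|[set e in E | e.1 == v]|).

(* GF(2)-sum (symmetric difference) of the edge sets of the cycles indexed by I *)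
Definition cycles_sum (k : nat) (cyc : 'I_k -> seq T) (I : {set 'I_k}) : {set T * T} :=
  [set e | odd #|[set i in I | e \in cycle_edges (cyc i)]|].

Definition cycle_basis (adj : rel T) (k : nat) (cyc : 'I_k -> seq T) : Prop :=
  (forall i, is_cycle adj (cyc i)) /\
  (forall I : {set 'I_k}, I != finset.set0 -> cycles_sum cyc I != finset.set0) /\
  (forall E, even_edge_set adj E -> exists I : {set 'I_k}, cycles_sum cyc I = E).

End Graph.

Section Power.
Variables (R : realType) (T : finType).

Definition ALT (adj : rel T) (Gset : {set T})
  (Gl Bl : T -> T -> R) (Gb Bb pd qd Vmin Vmax pmin pmax qmin qmax : T -> R)
  (pg qg : T -> R) (c s : T -> T -> R) : Prop :=
  (forall i, pg i - pd i = Gb i * c i i + \sum_(j | adj i j) (Gl i j * c i j - Bl i j * s i j)) /\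
  (forall i, qg i - qd i = - Bb i * c i i + \sum_(j | adj i j) (- Bl i j * c i j - Gl i j * s i j)) /\
  (forall i, Vmin i ^+ 2 <= c i i <= Vmax i ^+ 2) /\
  (forall i j, adj i j -> c i j = c j i /\ s i j = - s j i) /\
  (forall i, i \in Gset -> pmin i <= pg i <= pmax i /\ qmin i <= qg i <= qmax i) /\
  (forall i, i \notin Gset -> pg i = 0 /\ qg i = 0).

(* feasibility for the OPF formulation; ori picks one orientation per line *)
Definition OPF_feasible (adj ori : rel T) (Gset : {set T})
  (Gl Bl : T -> T -> R) (Gb Bb pd qd Vmin Vmax pmin pmax qmin qmax : T -> R)
  (pg qg : T -> R) (c s : T -> T -> R) (th : T -> R) : Prop :=
  ALT adj Gset Gl Bl Gb Bb pd qd Vmin Vmax pmin pmax qmin qmax pg qg c s /\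
  (forall i j, adj i j -> c i j ^+ 2 + s i j ^+ 2 = c i i * c j j) /\
  (forall i j, ori i j -> th j - th i = atan2 (s i j) (c i j)).

(* labels 1..n of a cycle p (bus number k is the (k-1)-th entry of p) *)
Definition lab (p : seq T) (x0 : T) (k : nat) : T := nth x0 p k.-1.
Definition nxt (n k : nat) : nat := if k == n then 1%N else k.+1.

(* constraints (i)/(ii) for a cycle p (with existentially chosen auxiliary
   variables tc i = ~c_{1,i}, ts i = ~s_{1,i}) *)
Definition cycle_constr (p : seq T) (c s : T -> T -> R) : Prop :=
  match p with
  | [::] => True
  | x0 :: _ =>
    let n := size p in
    let C a b := c (lab p x0 a) (lab p x0 b) in
    let S a b := s (lab p x0 a) (lab p x0 b) in
    if n == 3%N then
      S 1 2 * C 3 3 + C 2 3 * S 3 1 + S 2 3 * C 3 1 = 0 /\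
      C 1 2 * C 3 3 - C 2 3 * C 3 1 + S 2 3 * S 3 1 = 0
    else
      exists tc ts : nat -> R,
        [/\ tc 2%N = C 1 2 /\ ts 2%N = S 1 2, tc n = C 1 n /\ ts n = S 1 n,
         (forall i, (2 <= i <= n.-1)%N ->
            ts i * C i.+1 i.+1 + S i i.+1 * tc i.+1 - ts i.+1 * C i i.+1 = 0 /\
            tc i * C i.+1 i.+1 - C i i.+1 * tc i.+1 - ts i.+1 * S i i.+1 = 0),
         (forall i, (2 <= i <= n.-1)%N -> tc i ^+ 2 + ts i ^+ 2 = C 1 1 * C i i) &
         (forall i, (1 <= i <= n)%N ->
            C i (nxt n i) ^+ 2 + S i (nxt n i) ^+ 2 = C i i * C (nxt n i) (nxt n i))]
  end.

Definition cycle_angle_sum (p : seq T) (c s : T -> T -> R) : R :=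
  match p with
  | [::] => 0
  | x0 :: _ =>
    \sum_(1 <= k < (size p).+1)
       atan2 (s (lab p x0 k) (lab p x0 (nxt (size p) k)))
             (c (lab p x0 k) (lab p x0 (nxt (size p) k)))
  end.

End Power.

From HB Require Import structures.
From mathcomp Require Import all_boot all_order all_algebra.
From mathcomp Require Import all_classical all_reals all_analysis.
From mathcomp Require Import ring lra zify.
Import Order.TTheory GRing.Theory Num.Theory.
Set Implicit Arguments. Unset Strict Implicit. Unset Printing Implicit Defensive.
Local Open Scope ring_scope.

(* For the edges of a cycle write z_k = c_{k,k+1} + i s_{k,k+1}, of argument
   phi_k = atan2(s_{k,k+1}, c_{k,k+1}), and w_i = ~c_{1,i} + i ~s_{1,i}.  Given the
   coupling equalities, the two bilinear constraints for i say exactly that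
   c_{ii} w_{i+1} = w_i z_i, so w_i has argument phi_1 + ... + phi_{i-1}.  Closing
   the cycle, w_n = conj z_n, hence w_n z_n = |z_n|^2 > 0 and the angle sum is a
   multiple of 2 pi.  Conversely, at a feasible OPF point c_ij + i s_ij = conj(v_i) v_j
   for v_k = sqrt(c_kk) e^{i theta_k}, and w_i := conj(v_1) v_i satisfies all the
   constraints identically. *)

Section Argument.
Variable R : realType.

Lemma cosD_int2pi (a : R) (z : int) : cos (a + 2 * pi * z%:~R) = cos a.
Proof.
have cosDn (b : R) n : cos (b + 2 * pi * n%:R) = cos b.
  by rewrite mulr_natl mulr_natr (periodicn (@cosD2pi R)).
case: z => n; first exact: cosDn.
rewrite NegzE mulrNz mulrN -[in RHS](subrK (2 * pi * n.+1%:R) a).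
exact/esym/cosDn.
Qed.

Lemma cos_eq1 (x : R) : cos x = 1 -> exists z : int, x = 2 * pi * z%:~R.
Proof.
move=> cx1; have pi2_gt0 : 0 < 2 * (pi : R) by rewrite mulr_gt0 ?pi_gt0.
pose z := Num.floor (x / (2 * pi)); exists z.
have /andP[zx xz] := Num.Theory.floor_itv (x / (2 * pi)); rewrite -/z in zx xz.
pose y := x - 2 * pi * z%:~R.
have cy1 : cos y = 1 by rewrite /y -mulrN -mulrNz cosD_int2pi.
have y_ge0 : 0 <= y by rewrite /y subr_ge0 mulrC -ler_pdivlMr.
have y_lt2pi : y < 2 * pi.
  rewrite /y ltrBlDl -[X in _ + X]mulr1 -mulrDr mulrC -ltr_pdivrMr //.
  by move: xz; rewrite intrD.
have zero_in : (0 : R) \in `[0, pi] by rewrite in_itv /= lexx pi_ge0.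
have [y_lepi | pi_lty] := lerP y pi.
  suff : y = 0 by move/eqP; rewrite subr_eq0 => /eqP.
  by apply: cos_inj; rewrite ?cos0 // in_itv /= y_ge0.
suff : 2 * pi - y = 0 by lra.
apply: cos_inj; rewrite ?cos0 ?in_itv /=; last first.
- by rewrite -cosN opprB -(cosD_int2pi (y - 2 * pi) 1) mulr1 subrK.
- by [].
- by apply/andP; split; lra.
Qed.

Lemma sin_atan (t : R) : sin (atan t) = t / Num.sqrt (1 + t ^+ 2).
Proof.
have cos_neq0 : cos (atan t) != 0.
  rewrite cos_atan invr_eq0 sqrtr_eq0 -ltNge; apply: (lt_le_trans ltr01).
  by rewrite lerDl sqr_ge0.
have -> : sin (atan t) = tan (atan t) * cos (atan t) by rewrite /tan divfK.
by rewrite atanK cos_atan.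
Qed.

Lemma polar_atan2 (x y : R) :
  Num.sqrt (x ^+ 2 + y ^+ 2) * cos (atan2 y x) = x /\
  Num.sqrt (x ^+ 2 + y ^+ 2) * sin (atan2 y x) = y.
Proof.
rewrite /atan2.
have norm_factor : x != 0 ->
    Num.sqrt (x ^+ 2 + y ^+ 2) = `|x| * Num.sqrt (1 + (y / x) ^+ 2) /\
    0 < Num.sqrt (1 + (y / x) ^+ 2).
  move=> x0; split.
    by rewrite -sqrtr_sqr -sqrtrM ?sqr_ge0 //; congr Num.sqrt; field.
  by rewrite sqrtr_gt0; apply: (lt_le_trans ltr01); rewrite lerDl sqr_ge0.
have [x_gt0 | x_le0] := ltrP 0 x.
  have [-> g_gt0] := norm_factor (lt0r_neq0 x_gt0).
  rewrite cos_atan sin_atan gtr0_norm //.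
  by split; field; rewrite ?(lt0r_neq0 x_gt0) ?(lt0r_neq0 g_gt0).
have [x_lt0 | x_ge0] := ltrP x 0.
  have [-> g_gt0] := norm_factor (ltr0_neq0 x_lt0).
  have cosDpiN a : cos (a - pi) = - cos a by rewrite -[in RHS](subrK pi a) cosDpi opprK.
  have sinDpiN a : sin (a - pi) = - sin a by rewrite -[in RHS](subrK pi a) sinDpi opprK.
  rewrite ltr0_norm //.
  by case: ifP => _; rewrite ?cosDpi ?sinDpi ?cosDpiN ?sinDpiN cos_atan sin_atan;
    split; field; rewrite ?(ltr0_neq0 x_lt0) ?(lt0r_neq0 g_gt0).
have -> : x = 0 by apply/eqP; rewrite eq_le x_le0 x_ge0.
rewrite expr0n /= add0r sqrtr_sqr.
have [y_gt0 | y_le0] := ltrP 0 y.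
  by rewrite cos_pihalf sin_pihalf gtr0_norm // mulr0 mulr1.
have [y_lt0 | y_ge0] := ltrP y 0.
  by rewrite cosN sinN cos_pihalf sin_pihalf ltr0_norm // mulr0 mulrN mulr1 opprK.
have -> : y = 0 by apply/eqP; rewrite eq_le y_le0 y_ge0.
by rewrite normr0 !mul0r.
Qed.

Definition is_arg (F x y : R) : Prop :=
  exists2 r, 0 < r & x = r * cos F /\ y = r * sin F.

Lemma is_arg_atan2 (x y : R) : 0 < x ^+ 2 + y ^+ 2 -> is_arg (atan2 y x) x y.
Proof.
move=> xy_gt0; have [hx hy] := polar_atan2 x y.
by exists (Num.sqrt (x ^+ 2 + y ^+ 2)); rewrite ?sqrtr_gt0.
Qed.

Lemma is_argD (F G x y u v : R) : is_arg F x y -> is_arg G u v ->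
  is_arg (F + G) (x * u - y * v) (y * u + x * v).
Proof.
move=> [r r_gt0 [-> ->]] [q q_gt0 [-> ->]].
by exists (r * q); [exact: mulr_gt0 | rewrite cosD sinD; split; ring].
Qed.

Lemma is_argZ (F x y k : R) : 0 < k -> is_arg F x y -> is_arg F (k * x) (k * y).
Proof.
by move=> k_gt0 [r r_gt0 [-> ->]]; exists (k * r); rewrite ?mulr_gt0 ?mulrA.
Qed.

Lemma is_arg_posr_cos1 (F x : R) : is_arg F x 0 -> 0 < x -> cos F = 1.
Proof.
move=> [r r_gt0 [-> /esym/eqP]]; rewrite mulf_eq0 gt_eqF //= => /eqP sinF0.
rewrite pmulr_rgt0 // => cosF_gt0.
by apply/eqP; rewrite -sqrp_eq1 ?ltW // -(cos2Dsin2 F) sinF0 expr0n addr0.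
Qed.

Lemma cycle_recurrence_solve (tc ts tc' ts' C S Di Dj : R) :
  0 < Dj -> C ^+ 2 + S ^+ 2 = Di * Dj ->
  ts * Dj + S * tc' - ts' * C = 0 -> tc * Dj - C * tc' - ts' * S = 0 ->
  Di * tc' = tc * C - ts * S /\ Di * ts' = ts * C + tc * S.
Proof.
move=> Dj_gt0 hCS e1 e2; have Dj_neq0 := lt0r_neq0 Dj_gt0.
split; apply: (mulfI Dj_neq0).
  have -> : Dj * (Di * tc') = Dj * (tc * C - ts * S) + tc' * (Di * Dj - (C ^+ 2 + S ^+ 2))
      - C * (tc * Dj - C * tc' - ts' * S) + S * (ts * Dj + S * tc' - ts' * C) by ring.
  by rewrite hCS e1 e2; ring.
have -> : Dj * (Di * ts') = Dj * (ts * C + tc * S) + ts' * (Di * Dj - (C ^+ 2 + S ^+ 2))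
    - S * (tc * Dj - C * tc' - ts' * S) - C * (ts * Dj + S * tc' - ts' * C) by ring.
by rewrite hCS e1 e2; ring.
Qed.

Lemma is_arg_recurrence (F f tc ts tc' ts' C S Di Dj : R) :
  0 < Di -> 0 < Dj -> C ^+ 2 + S ^+ 2 = Di * Dj ->
  ts * Dj + S * tc' - ts' * C = 0 -> tc * Dj - C * tc' - ts' * S = 0 ->
  is_arg F tc ts -> is_arg f C S -> is_arg (F + f) tc' ts'.
Proof.
move=> Di_gt0 Dj_gt0 hCS e1 e2 hF hf.
have [E1 E2] := cycle_recurrence_solve Dj_gt0 hCS e1 e2.
have Di_neq0 := lt0r_neq0 Di_gt0.
rewrite -[tc'](mulKf Di_neq0) -[ts'](mulKf Di_neq0) E1 E2.
by apply: is_argZ; [rewrite invr_gt0 | exact: is_argD].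
Qed.

End Argument.

Lemma nxt_lt (n k : nat) : (k < n)%N -> nxt n k = k.+1.
Proof. by rewrite /nxt; case: eqP => // ->; rewrite ltnn. Qed.

Section AngleChain.
Variables (R : realType) (n : nat) (C S D tc ts : nat -> R).
Hypotheses (n_ge2 : (2 <= n)%N) (D_gt0 : forall k, 0 < D k).
Hypothesis edge_norm :
  forall k, (1 <= k <= n)%N -> C k ^+ 2 + S k ^+ 2 = D k * D (nxt n k).
Hypotheses (tc2 : tc 2 = C 1) (ts2 : ts 2 = S 1) (tcn : tc n = C n) (tsn : ts n = - S n).
Hypothesis recurrence : forall i, (2 <= i <= n.-1)%N ->
  ts i * D i.+1 + S i * tc i.+1 - ts i.+1 * C i = 0 /\
  tc i * D i.+1 - C i * tc i.+1 - ts i.+1 * S i = 0.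

Let phi k := atan2 (S k) (C k).

Lemma is_arg_edge k : (1 <= k <= n)%N -> is_arg (phi k) (C k) (S k).
Proof. by move=> kn; apply: is_arg_atan2; rewrite edge_norm // mulr_gt0. Qed.

Lemma is_arg_chain m : (2 <= m <= n)%N -> is_arg (\sum_(1 <= k < m) phi k) (tc m) (ts m).
Proof.
elim: m => // m IH /andP[m_ge1 m_lt].
have [m_gt1 | m_le1] := ltnP 1 m; last first.
  have -> : m = 1%N by lia.
  by rewrite big_nat1 tc2 ts2; apply: is_arg_edge; lia.
have m_mid : (2 <= m <= n.-1)%N by lia.
have m_edge : (1 <= m <= n)%N by lia.
have [e1 e2] := recurrence m_mid.
have hCS := edge_norm m_edge; rewrite nxt_lt in hCS; last lia.
rewrite big_nat_recr; last lia.
apply: is_arg_recurrence (D_gt0 m) (D_gt0 m.+1) hCS e1 e2 _ (is_arg_edge m_edge).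
by apply: IH; lia.
Qed.

Lemma chain_angle_sum : exists z : int, \sum_(1 <= k < n.+1) phi k = 2 * pi * z%:~R.
Proof.
have n_mid : (2 <= n <= n)%N by lia.
have n_edge : (1 <= n <= n)%N by lia.
apply: cos_eq1; rewrite big_nat_recr /=; last lia.
have := is_argD (is_arg_chain n_mid) (is_arg_edge n_edge).
rewrite tcn tsn; have -> : C n * C n - - S n * S n = C n ^+ 2 + S n ^+ 2 by ring.
have -> : - S n * C n + C n * S n = 0 by ring.
by move/is_arg_posr_cos1; apply; rewrite edge_norm ?mulr_gt0.
Qed.

End AngleChain.

Section CycleLabels.
Variables (T : finType) (x0 : T) (p : seq T).
Hypothesis p_uniq : uniq (x0 :: p).
Let n := size (x0 :: p).

Lemma next_lab k : (1 <= k <= n)%N ->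
  next (x0 :: p) (lab (x0 :: p) x0 k) = lab (x0 :: p) x0 (nxt n k).
Proof.
move=> /andP[k_ge1 k_le]; have k_lt : (k.-1 < n)%N by lia.
rewrite next_nth /lab mem_nth // index_uniq // /nxt /=.
by case: eqP => [-> | k_neq] /=; [rewrite nth_default | case: k k_ge1 k_le k_lt k_neq].
Qed.

Lemma cycle_adj_lab (adj : rel T) k : cycle adj (x0 :: p) -> (1 <= k <= n)%N ->
  adj (lab (x0 :: p) x0 k) (lab (x0 :: p) x0 (nxt n k)).
Proof.
move=> p_cycle kn; rewrite -next_lab //; apply: next_cycle p_cycle _.
rewrite /lab mem_nth //; move: kn; rewrite /n /=; lia.
Qed.

End CycleLabels.

Section CycleConstraints.
Variables (R : realType) (T : finType) (adj : rel T).
Hypothesis adj_sym : forall i j, adj i j = adj j i.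

(* c_ij + i s_ij = conj(v_i) v_j on the lines, for the complex voltages v = x + i y. *)
Definition voltage_form (c s : T -> T -> R) (x y : T -> R) : Prop :=
  (forall i, c i i = x i ^+ 2 + y i ^+ 2) /\
  (forall i j, adj i j -> c i j = x i * x j + y i * y j /\ s i j = x i * y j - y i * x j).

Lemma cycle_constr_voltage_form c s x y p :
  voltage_form c s x y -> is_cycle adj p -> cycle_constr p c s.
Proof.
move=> [diag edge] /and3P[p_uniq n_ge3 p_cycle].
case: p p_uniq n_ge3 p_cycle => [// | x0 p] p_uniq n_ge3 p_cycle.
rewrite /cycle_constr; cbv beta iota zeta.
have adjL := fun k => @cycle_adj_lab T x0 p p_uniq adj k p_cycle.
set L := lab (x0 :: p) x0 in adjL *; set n := size (x0 :: p) in n_ge3 adjL *.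
case: ifP => [/eqP n3 | /eqP n_neq3].
  have [a12 a23 a31] : [/\ adj (L 1) (L 2), adj (L 2) (L 3) & adj (L 3) (L 1)].
    by split; [move: (adjL 1) | move: (adjL 2) | move: (adjL 3)]; rewrite /nxt n3; apply.
  have [-> ->] := edge _ _ a12; have [-> ->] := edge _ _ a23.
  by have [-> ->] := edge _ _ a31; rewrite diag; split; ring.
have adj_next i : (1 <= i < n)%N -> adj (L i) (L i.+1).
  by move=> i_mid; rewrite -(@nxt_lt n); [apply: adjL |]; lia.
have a1n : adj (L 1) (L n) by rewrite adj_sym; move: (adjL n); rewrite /nxt eqxx; apply; lia.
exists (fun i => x (L 1) * x (L i) + y (L 1) * y (L i)).
exists (fun i => x (L 1) * y (L i) - y (L 1) * x (L i)).
split.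
- by have [-> ->] := edge _ _ (adj_next 1 ltac:(lia)).
- by have [-> ->] := edge _ _ a1n.
- move=> i i_mid; have [-> ->] := edge _ _ (adj_next i ltac:(lia)).
  by rewrite diag; split; ring.
- by move=> i _; rewrite !diag; ring.
- by move=> i i_mid; have [-> ->] := edge _ _ (adjL i i_mid); rewrite !diag; ring.
Qed.

Lemma voltage_form_of_angles (ori : rel T) (c s : T -> T -> R) (th : T -> R) :
  (forall i j, ori i j -> adj i j) -> (forall i j, adj i j -> ori i j (+) ori j i) ->
  (forall i, 0 <= c i i) ->
  (forall i j, adj i j -> c i j = c j i /\ s i j = - s j i) ->
  (forall i j, adj i j -> c i j ^+ 2 + s i j ^+ 2 = c i i * c j j) ->
  (forall i j, ori i j -> th j - th i = atan2 (s i j) (c i j)) ->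
  voltage_form c s (fun i => Num.sqrt (c i i) * cos (th i))
                   (fun i => Num.sqrt (c i i) * sin (th i)).
Proof.
move=> ori_adj ori_one c_ge0 c_sym coupling th_atan2; split.
  by move=> i; rewrite !exprMn -mulrDr cos2Dsin2 mulr1 sqr_sqrtr.
have oriented i j : ori i j ->
    c i j = Num.sqrt (c i i) * cos (th i) * (Num.sqrt (c j j) * cos (th j))
          + Num.sqrt (c i i) * sin (th i) * (Num.sqrt (c j j) * sin (th j)) /\
    s i j = Num.sqrt (c i i) * cos (th i) * (Num.sqrt (c j j) * sin (th j))
          - Num.sqrt (c i i) * sin (th i) * (Num.sqrt (c j j) * cos (th j)).
  move=> oij; have [hc hs] := polar_atan2 (c i j) (s i j).
  rewrite coupling ?ori_adj // sqrtrM // -th_atan2 // cosB sinB in hc hs.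
  by rewrite -{1}hc -{1}hs; split; ring.
move=> i j aij; have [oij | noij] := boolP (ori i j); first exact: oriented.
have oji : ori j i by move: (ori_one i j aij); rewrite (negbTE noij).
by have [-> ->] := c_sym i j aij; have [-> ->] := oriented j i oji; split; ring.
Qed.

Lemma cycle_angle_sum_constr (c s : T -> T -> R) p :
  (forall i, 0 < c i i) ->
  (forall i j, adj i j -> c i j = c j i /\ s i j = - s j i) ->
  (forall i j, adj i j -> c i j ^+ 2 + s i j ^+ 2 = c i i * c j j) ->
  is_cycle adj p -> cycle_constr p c s ->
  exists z : int, cycle_angle_sum p c s = 2 * pi * z%:~R.
Proof.
move=> c_gt0 c_sym coupling /and3P[p_uniq n_ge3 p_cycle].
case: p p_uniq n_ge3 p_cycle => [// | x0 p] p_uniq n_ge3 p_cycle.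
rewrite /cycle_constr /cycle_angle_sum; cbv beta iota zeta.
have adjL := fun k => @cycle_adj_lab T x0 p p_uniq adj k p_cycle.
set L := lab (x0 :: p) x0 in adjL *; set n := size (x0 :: p) in n_ge3 adjL *.
have a_n1 : adj (L n) (L 1) by move: (adjL n); rewrite /nxt eqxx; apply; lia.
move=> hcon.
have [tc [ts [[tc2 ts2] [tcn tsn] rec]]] : exists tc ts : nat -> R,
  [/\ tc 2 = c (L 1) (L 2) /\ ts 2 = s (L 1) (L 2),
      tc n = c (L 1) (L n) /\ ts n = s (L 1) (L n) &
      forall i, (2 <= i <= n.-1)%N ->
        ts i * c (L i.+1) (L i.+1) + s (L i) (L i.+1) * tc i.+1 - ts i.+1 * c (L i) (L i.+1) = 0 /\
        tc i * c (L i.+1) (L i.+1) - c (L i) (L i.+1) * tc i.+1 - ts i.+1 * s (L i) (L i.+1) = 0].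
  move: hcon; case: ifP => [/eqP n3 [e1 e2] | _ [tc [ts [h2 hn hrec _ _]]]]; last first.
    by exists tc, ts.
  exists (fun i => c (L 1) (L i)), (fun i => s (L 1) (L i)); split=> // i i_mid.
  have -> : i = 2%N by lia.
  have a13 : adj (L 1) (L 3) by move: a_n1; rewrite n3 adj_sym.
  have [-> ->] := c_sym _ _ a13.
  by split; [rewrite -e1 | rewrite -e2]; ring.
have a_1n : adj (L 1) (L n) by rewrite adj_sym.
have [c_1n s_1n] := c_sym _ _ a_1n.
rewrite {}c_1n in tcn; rewrite {}s_1n in tsn.
apply: (@chain_angle_sum R n _ _ (fun k => c (L k) (L k)) tc ts).
- lia.
- by move=> k; apply: c_gt0.
- by move=> k kn; apply: coupling; apply: adjL.
- by rewrite tc2 nxt_lt //; lia.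
- by rewrite ts2 nxt_lt //; lia.
- by rewrite /nxt eqxx tcn.
- by rewrite /nxt eqxx tsn.
- by move=> i i_mid; rewrite nxt_lt; [apply: rec | lia].
Qed.

End CycleConstraints.

Theorem proposition7 (R : realType) (T : finType)
  (adj : rel T) (Gset : {set T})
  (Gl Bl : T -> T -> R) (Gb Bb pd qd Vmin Vmax pmin pmax qmin qmax : T -> R)
  (ori : rel T) (k : nat) (cyc : 'I_k -> seq T)
  (adj_sym : forall i j, adj i j = adj j i)
  (adj_irr : forall i, ~~ adj i i)
  (Gl_sym : forall i j, adj i j -> Gl i j = Gl j i)
  (Bl_sym : forall i j, adj i j -> Bl i j = Bl j i)
  (Vmin_pos : forall i, 0 < Vmin i)
  (Vmin_le : forall i, Vmin i <= Vmax i)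
  (pmin_le : forall i, i \in Gset -> pmin i <= pmax i)
  (qmin_le : forall i, i \in Gset -> qmin i <= qmax i)
  (ori_adj : forall i j, ori i j -> adj i j)
  (ori_one : forall i j, adj i j -> (ori i j (+) ori j i))
  (basis : cycle_basis adj cyc) :
  (* (a) validity *)
  (forall (pg qg : T -> R) (c s : T -> T -> R) (th : T -> R),
     OPF_feasible adj ori Gset Gl Bl Gb Bb pd qd Vmin Vmax pmin pmax qmin qmax pg qg c s th ->
     forall b : 'I_k, cycle_constr (cyc b) c s) /\
  (* (b) angle sums around basis cycles are multiples of 2 pi *)
  (forall (pg qg : T -> R) (c s : T -> T -> R),
     ALT adj Gset Gl Bl Gb Bb pd qd Vmin Vmax pmin pmax qmin qmax pg qg c s ->
     (forall i j, adj i j -> c i j ^+ 2 + s i j ^+ 2 = c i i * c j j) ->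
     (forall b : 'I_k, cycle_constr (cyc b) c s) ->
     forall b : 'I_k, exists z : int, cycle_angle_sum (cyc b) c s = 2 * pi * z%:~R).
Proof.
have diag_gt0 (c : T -> T -> R) :
    (forall i, Vmin i ^+ 2 <= c i i <= Vmax i ^+ 2) -> forall i, 0 < c i i.
  by move=> c_bnd i; case/andP: (c_bnd i) => + _; apply: lt_le_trans; rewrite exprn_gt0.
split=> [pg qg c s th [[_ [_ [c_bnd [c_sym _]]]] [coupling th_atan2]] b
        | pg qg c s [_ [_ [c_bnd [c_sym _]]]] coupling c_constr b].
  apply: (cycle_constr_voltage_form adj_sym _ (basis.1 b)).
  apply: voltage_form_of_angles ori_adj ori_one _ c_sym coupling th_atan2.
  by move=> i; rewrite ltW ?diag_gt0.
exact: (cycle_angle_sum_constr adj_sym (diag_gt0 c c_bnd) c_sym coupling (basis.1 b) (c_constr b)).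
Qed.
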